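(* Let $(\pi_r)_{r\in\mathbb{N}}$ be periods with $\pi_r\ge2$ for all $r$, and let $(K_t)_{t\in\mathbb{N}}$ be the multiperiodic process with periods $(\pi_r)$. For $T\in\mathbb{N}$ define the random set of types $\mathcal{N}_T:=\{K_1,\dots,K_T\}\cap\mathbb{N}$, and the deterministic sets $$\mathcal{A}_T:=\{r\in\mathbb{N}:\bar w_r\le T\},\qquad \mathcal{B}_T:=\{r\in\mathbb{N}:P(K_1=r)\ge 1/T\},$$ where $\bar w_r:=v_1$ with $v_r:=\pi_r$ and $v_i:=v_{i+1}\pi_i/(\pi_i-1)+1$ for $i=r-1,\dots,1$. Then $$\operatorname{card}\mathcal{A}_T\le \mathbb{E}\operatorname{card}\mathcal{N}_T\le \operatorname{card}\mathcal{B}_T+T\,P(K_1\notin\mathcal{B}_T).$$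
   Context: $\mathbb{N}=\{1,2,3,\dots\}$. Multiperiodic sequence with periods $\pi_r\in\mathbb{N}$ and seeds $\sigma_r\in\{1,\dots,\pi_r\}$: the sequence $(k_t)_{t\in\mathbb{N}}$ with values in $\mathbb{N}\cup\{\infty\}$ such that for each $r$, the subsequence obtained from $(k_t)$ by deleting all tokens $k_t<r$, denoted $(k^{(r)}_t)_{t\in\mathbb{N}}$, satisfies $k^{(r)}_t=r\iff t\equiv\sigma_r\pmod{\pi_r}$; entries left undefined for all $r$ are set to $\infty$. Equivalently: clocks $\phi_r$ start at $\sigma_r$; for each token, scan $r=1,2,\dots$, decrementing each clock with $\phi_r>1$, until the first $r$ with $\phi_r=1$, output that $r$ and reset $\phi_r=\pi_r$. The multiperiodic process with periods $(\pi_r)$ is the random multiperiodic sequence with these periods and independent random seeds $\Sigma_r$ uniformly distributed on $\{1,\dots,\pi_r\}$; it is stationary, so $P(K_t=r)$ does not depend on $t$. *)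

From HB Require Import structures.
From mathcomp Require Import all_boot all_order all_algebra.
From mathcomp Require Import all_classical all_reals all_analysis.
Set Implicit Arguments. Unset Strict Implicit. Unset Printing Implicit Defensive.
Import Order.TTheory GRing.Theory Num.Theory.
Local Open Scope ring_scope.

(* Types are indexed by r >= 1 (nat index 0 is unused); clocks are
   functions phi : nat -> nat, phi r = current value of clock r. *)

(* One scan of the clock algorithm restricted to clocks r, r+1, ..., r+fuel-1.
   Returns the output type (0 if no clock in that range rings) and the
   updated clocks. *)
Fixpoint scan (pi phi : nat -> nat) (r fuel : nat) : nat * (nat -> nat) :=
  match fuel with
  | 0 => (0%N, phi)
  | fuel'.+1 =>
      if phi r == 1%N then (r, fun j => if j == r then pi r else phi j)
      else scan pi (fun j => if j == r then (phi r).-1 else phi j) r.+1 fuel'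
  end.

Definition clocks (pi sigma : nat -> nat) (R t : nat) : nat -> nat :=
  iter t (fun phi => (scan pi phi 1 R).2) sigma.

(* The t-th token (t >= 1) of the algorithm truncated to types 1..R
   (0 means "no type <= R rings"). *)
Definition token (pi sigma : nat -> nat) (R t : nat) : nat :=
  (scan pi (clocks pi sigma R t.-1) 1 R).1.

(* K_t = r (for a finite type r >= 1) in the multiperiodic sequence with
   periods pi and seeds sigma.  Since the scan visits types in increasing
   order, the evolution of clocks 1..r does not depend on clocks > r, so
   K_t = r iff the algorithm truncated to types 1..r outputs r at time t. *)
Definition Kis (pi sigma : nat -> nat) (t r : nat) : bool :=
  (0 < r)%N && (token pi sigma r t == r).

(* v-recursion: vrec pi r n = v_{r-n}, with v_r = pi_r and
   v_i = v_{i+1} pi_i / (pi_i - 1) + 1. *)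
Fixpoint vrec (R : realType) (pi : nat -> nat) (r n : nat) : R :=
  match n with
  | 0 => (pi r)%:R
  | n'.+1 => let i := (r - n'.+1)%N in
             vrec R pi r n' * (pi i)%:R / ((pi i)%:R - 1) + 1
  end.

Definition wbar (R : realType) (pi : nat -> nat) (r : nat) : R :=
  vrec R pi r (r.-1).

From HB Require Import structures.
From mathcomp Require Import all_boot all_order all_algebra.
From mathcomp Require Import all_classical all_reals all_analysis.
From mathcomp Require Import measurable_realfun zify.
Import Order.TTheory GRing.Theory Num.Theory.
Set Implicit Arguments. Unset Strict Implicit. Unset Printing Implicit Defensive.

(* Restrict the clock algorithm to the types i, ..., r.  Clock i rings once in
   every pi_i tokens and the other pi_i - 1 tokens are passed on to the block of
   types i + 1, ..., r; hence if that block outputs r by its m-th token, the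
   block starting at i does so by its (m pi_i / (pi_i - 1) + 1)-st token.  Going
   down from r to 1 shows that r occurs among the first wbar_r tokens for every
   legal seed, so P(r \in N_T) = 1 when wbar_r <= T, and summing
   E card N_T = \sum_r P(r \in N_T) gives the lower bound.
   One step of the algorithm permutes the finitely many legal clock states of
   the types 1, ..., r, on which the seed is uniform: the law of K_t does not
   depend on t.  So P(r \in N_T) <= T P(K_1 = r) by the union bound; we use this
   for r \notin B_T and P(r \in N_T) <= 1 for r \in B_T, and the disjoint events
   {K_1 = r}, r \notin B_T, have total probability P(K_1 \notin B_T). *)

Section Scan.
Variable pi : nat -> nat.

Definition set_clock (phi : nat -> nat) (i a : nat) : nat -> nat :=
  fun j => if j == i then a else phi j.

Lemma scanS phi m n : scan pi phi m n.+1 =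
  if phi m == 1%N then (m, set_clock phi m (pi m))
  else scan pi (set_clock phi m (phi m).-1) m.+1 n.
Proof. by []. Qed.

Lemma scan_below phi m n j : (j < m)%N -> (scan pi phi m n).2 j = phi j.
Proof.
elim: n m phi => [|n IH] m phi hj //; rewrite scanS /set_clock.
case: ifP => _ /=; first by rewrite (ltn_eqF hj).
by rewrite IH ?(ltn_eqF hj) // ltnW.
Qed.

Lemma scan_cat phi m n k : (0 < m)%N ->
  scan pi phi m (n + k) = if (scan pi phi m n).1 != 0%N then scan pi phi m n
                          else scan pi (scan pi phi m n).2 (m + n) k.
Proof.
elim: n m phi => [|n IH] m phi hm; first by rewrite addn0.
rewrite addSn !scanS; case: ifP => _ /=; first by rewrite -lt0n hm.
by rewrite IH // addSnnS.
Qed.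

Lemma scan_eq_on phi phi' m n :
  (forall j, (m <= j < m + n)%N -> phi j = phi' j) ->
  (scan pi phi m n).1 = (scan pi phi' m n).1 /\
  (forall j, phi j = phi' j -> (scan pi phi m n).2 j = (scan pi phi' m n).2 j).
Proof.
elim: n m phi phi' => [|n IH] m phi phi' h //.
rewrite !scanS; have -> : phi' m = phi m by rewrite h // leqnn addnS ltnS leq_addr.
case: ifP => _ /=; first by split=> // j; rewrite /set_clock; case: eqP.
have [] // := IH m.+1 (set_clock phi m (phi m).-1) (set_clock phi' m (phi m).-1).
  by move=> j /andP[mj jn]; rewrite /set_clock (gtn_eqF mj) h ?(ltnW mj) -?addSnnS.
by move=> eq1 eq2; split=> // j ej; apply: eq2; rewrite /set_clock ej.
Qed.

Definition legal_on (phi : nat -> nat) (a b : nat) :=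
  forall j, (a <= j < b)%N -> (1 <= phi j <= pi j)%N.

Lemma legal_set_clock phi m b a : legal_on phi m b -> (1 <= a <= pi m)%N ->
  legal_on (set_clock phi m a) m b.
Proof. by move=> hphi ha j hj; rewrite /set_clock; case: eqP => [->|_]; last exact: hphi. Qed.

Lemma legal_onS phi m b : legal_on phi m b -> legal_on phi m.+1 b.
Proof. by move=> hphi j /andP[mj jb]; rewrite hphi // (ltnW mj). Qed.

Lemma scan_legal phi m n :
  legal_on phi m (m + n) -> legal_on (scan pi phi m n).2 m (m + n).
Proof.
elim: n m phi => [|n IH] m phi hphi //; rewrite scanS.
have /andP[phim1 phim] : (1 <= phi m <= pi m)%N by rewrite hphi // leqnn addnS ltnS leq_addr.
case: ifP => ring1 /=; first by apply: legal_set_clock => //; lia.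
have hrec := IH m.+1 (set_clock phi m (phi m).-1).
move=> j /andP[mj jn]; have [->|jm] := eqVneq j m.
  by rewrite scan_below // /set_clock eqxx; move/negbT: ring1; lia.
apply: hrec; last by lia.
by rewrite addSnnS; apply/legal_onS/legal_set_clock => //; move/negbT: ring1; lia.
Qed.

Lemma scan_inj_on phi phi' m n :
  legal_on phi m (m + n) -> legal_on phi' m (m + n) ->
  (forall j, (m <= j < m + n)%N -> (scan pi phi m n).2 j = (scan pi phi' m n).2 j) ->
  forall j, (m <= j < m + n)%N -> phi j = phi' j.
Proof.
elim: n m phi phi' => [|n IH] m phi phi' hphi hphi' heq j hj; first by lia.
have hm : (m <= m < m + n.+1)%N by rewrite leqnn addnS ltnS leq_addr.
have /andP[a1 a2] := hphi m hm; have /andP[b1 b2] := hphi' m hm.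
have heqm := heq m hm; move: heq heqm; rewrite !scanS.
set f := set_clock phi m (phi m).-1; set f' := set_clock phi' m (phi' m).-1.
case: ifP => e1; case: ifP => e2 /= heq; rewrite ?scan_below // /f /f' /set_clock eqxx.
- have [->|jm] := eqVneq j m; first by move/eqP: e1 => ->; move/eqP: e2.
  by have := heq j hj; rewrite /set_clock (negbTE jm).
- by move/eqP: e2; lia.
- by move/eqP: e1; lia.
move=> em; have [->|jm] := eqVneq j m; first by move/eqP: e1; move/eqP: e2; lia.
have -> : phi j = f j by rewrite /f /set_clock (negbTE jm).
have -> : phi' j = f' j by rewrite /f' /set_clock (negbTE jm).
apply: (IH m.+1); rewrite ?addSnnS; try lia.
- by apply/legal_onS/legal_set_clock => //; move/negbT: e1; lia.
- by apply/legal_onS/legal_set_clock => //; move/negbT: e2; lia.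
by move=> i hi; apply: heq; lia.
Qed.

(* The algorithm restricted to the types m, ..., m + n - 1: [block_token m n phi t]
   is its token number t + 1 (counting from 0) when started from the clocks
   [phi], with 0 meaning that no clock of the block rang. *)
Definition block_step m n phi := (scan pi phi m n).2.
Definition block_token m n phi t := (scan pi (iter t (block_step m n) phi) m n).1.

Lemma block_tokenS m n phi t :
  block_token m n phi t.+1 = block_token m n (block_step m n phi) t.
Proof. by rewrite /block_token iterSr. Qed.

Lemma token_block sigma r t : token pi sigma r t = block_token 1 r sigma t.-1.
Proof. by []. Qed.

Lemma block_token_eq_on phi phi' m n t :
  (forall j, (m <= j < m + n)%N -> phi j = phi' j) ->
  block_token m n phi t = block_token m n phi' t.
Proof.
move=> h; suff /scan_eq_on[] : forall j, (m <= j < m + n)%N ->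
  iter t (block_step m n) phi j = iter t (block_step m n) phi' j by [].
elim: t => //= t IH j hj; have [_ eq2] := scan_eq_on IH; exact/eq2/IH.
Qed.

End Scan.

Section Levels.
Variable pi : nat -> nat.

Lemma block_token_single phi i a : phi i = a.+1 -> block_token pi i 1 phi a = i.
Proof.
elim: a phi => [|a IH] phi phi_i; first by rewrite /block_token /= phi_i.
rewrite block_tokenS; apply: IH.
by rewrite /block_step scanS phi_i /= /set_clock eqxx.
Qed.

Lemma block_token_lift i n phi m k : (1 < pi i)%N -> legal_on pi phi i (i + n.+1) ->
  block_token pi i.+1 n phi m = k ->
  exists t, block_token pi i n.+1 phi t = k /\ (t * (pi i).-1 + phi i <= m.+1 * pi i)%N.
Proof.
move=> pi_i; elim/ltn_ind: m phi => m IH phi hphi hk.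
have lift_pass psi : legal_on pi psi i (i + n.+1) -> (1 < psi i)%N ->
    block_token pi i.+1 n psi m = k ->
    exists t, block_token pi i n.+1 psi t = k /\ (t * (pi i).-1 + psi i <= m.+1 * pi i)%N.
  move=> hpsi psi_i hpk.
  have psi_le : (psi i <= pi i)%N by have /andP[] := hpsi i ltac:(lia).
  have agree j : (i.+1 <= j < i.+1 + n)%N -> set_clock psi i (psi i).-1 j = psi j.
    by move=> /andP[ij _]; rewrite /set_clock (gtn_eqF ij).
  have pass :
      block_token pi i n.+1 psi 0 = block_token pi i.+1 n (set_clock psi i (psi i).-1) 0.
    by rewrite /block_token scanS ifN_eq // gtn_eqF.
  have step : block_step pi i n.+1 psi = block_step pi i.+1 n (set_clock psi i (psi i).-1).
    by rewrite /block_step scanS ifN_eq // gtn_eqF.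
  case: m IH hk hpk => [|m] IH _ hpk.
    by exists 0%N; rewrite pass (block_token_eq_on pi _ agree) hpk mul0n add0n mul1n.
  have [|t [ht hb]] := IH m (ltnSn m) (block_step pi i n.+1 psi) (scan_legal hpsi).
    by rewrite step -block_tokenS (block_token_eq_on pi _ agree).
  exists t.+1; split; first by rewrite block_tokenS.
  by move: hb; rewrite step /block_step scan_below // /set_clock eqxx !mulSn; lia.
have /andP[phi_i1 phi_i] : (1 <= phi i <= pi i)%N by apply: hphi; lia.
have [phi_i2|phi_i_le1] := ltnP 1 (phi i); first exact: lift_pass.
have reset : block_step pi i n.+1 phi = set_clock phi i (pi i).
  by rewrite /block_step scanS ifT //; apply/eqP; lia.
have [|||t [ht hb]] := lift_pass (block_step pi i n.+1 phi).
- by rewrite reset; apply: legal_set_clock => //; lia.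
- by rewrite reset /set_clock eqxx.
- by rewrite -hk reset; apply: block_token_eq_on => j /andP[ij _]; rewrite /set_clock gtn_eqF.
exists t.+1; split; first by rewrite block_tokenS.
by move: hb; rewrite reset /set_clock eqxx !mulSn; lia.
Qed.

Hypothesis hpi : forall r : nat, (0 < r)%N -> (1 < pi r)%N.

Lemma block_token_last (R : realType) i n phi : (0 < i)%N -> legal_on pi phi i (i + n.+1) ->
  exists t, block_token pi i n.+1 phi t = (i + n)%N /\ (t.+1%:R <= vrec R pi (i + n) n)%R.
Proof.
elim: n i phi => [|n IH] i phi i_gt0 hphi.
  have /andP[phi_i1 phi_i] : (1 <= phi i <= pi i)%N by apply: hphi; lia.
  exists (phi i).-1; rewrite addn0 prednK // ler_nat; split => //.
  by apply: block_token_single; rewrite prednK.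
have [|m [hm hmv]] := IH i.+1 phi isT; first by rewrite addSnnS; apply: legal_onS.
have [t [ht hb]] := block_token_lift (hpi i_gt0) hphi hm.
exists t; split; first by rewrite ht addSnnS.
rewrite /= addnK -addSnnS -natr1 lerD2r.
have p_gt1 : (1 < (pi i)%:R :> R)%R by rewrite ltr1n hpi.
have p1_gt0 : (0 < (pi i)%:R - 1 :> R)%R by rewrite subr_gt0.
rewrite ler_pdivlMr // -(natrB _ (ltnW (hpi i_gt0))) subn1 -natrM.
apply: le_trans (ler_wpM2r (ler0n _ _) hmv); rewrite -natrM ler_nat.
by move: hb; rewrite !mulSn; lia.
Qed.

Lemma token_hit_before_wbar (R : realType) r sigma T : (0 < r)%N ->
  legal_on pi sigma 1 r.+1 -> (wbar R pi r <= T%:R)%R ->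
  exists2 t, (0 < t <= T)%N & token pi sigma r t = r.
Proof.
case: r => // n _ hsigma hw.
have [t [ht htv]] := block_token_last R (ltn0Sn 0) hsigma.
exists t.+1; last by rewrite token_block ht add1n.
by rewrite /= -(ler_nat R); apply: le_trans hw; rewrite /wbar -add1n.
Qed.

End Levels.

Section Truncation.
Variable pi : nat -> nat.

Lemma clocksS sigma r t : clocks pi sigma r t.+1 = (scan pi (clocks pi sigma r t) 1 r).2.
Proof. by []. Qed.

Lemma clocks_trunc r r' sigma t j : (r <= r')%N -> (0 < j <= r)%N ->
  clocks pi sigma r' t j = clocks pi sigma r t j.
Proof.
move=> rr'; elim: t j => [|t IH] j hj //; rewrite !clocksS.
have [_ eq2] := @scan_eq_on pi (clocks pi sigma r' t) (clocks pi sigma r t) 1 r IH.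
set phi' := clocks pi sigma r' t; rewrite -(subnKC rr') scan_cat //.
case: ifP => _; first exact/eq2/IH.
by rewrite scan_below ?eq2 ?IH // add1n ltnS; case/andP: hj.
Qed.

Lemma token_trunc r r' sigma t : (r <= r')%N -> token pi sigma r t != 0%N ->
  token pi sigma r' t = token pi sigma r t.
Proof.
move=> rr'; rewrite /token.
have [eq1 _] := @scan_eq_on pi (clocks pi sigma r' t.-1) (clocks pi sigma r t.-1) 1 r
  (fun j => clocks_trunc sigma t.-1 rr').
by rewrite -[X in (scan _ _ _ X).1 = _](subnKC rr') scan_cat // eq1 => ->.
Qed.

Lemma Kis_unique sigma t r r' : Kis pi sigma t r -> Kis pi sigma t r' -> r = r'.
Proof.
wlog rr' : r r' / (r <= r')%N.
  by move=> W h h'; have [/W|/ltnW/W] := leqP r r'; [apply | move=> E; apply/esym/E].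
move=> /andP[r_gt0 /eqP tr] /andP[_ /eqP tr'].
by rewrite -tr' (token_trunc rr') tr // -lt0n.
Qed.

Lemma Kis_eq_on sigma sigma' t r : (forall j, (0 < j <= r)%N -> sigma j = sigma' j) ->
  Kis pi sigma t r = Kis pi sigma' t r.
Proof. by move=> h; rewrite /Kis !token_block (block_token_eq_on pi _ h). Qed.

End Truncation.

Lemma count_has_le (I X : eqType) (l : seq I) (p : I -> pred X) (b : seq X) :
  (count (fun x => has (p ^~ x) l) b <= \sum_(i <- l) count (p i) b)%N.
Proof.
elim: l => [|i l IH] /=; first by rewrite big_nil count_pred0.
rewrite big_cons -[X in (X <= _)%N]/(count (predU (p i) (fun x => has (p ^~ x) l)) b).
by have := count_predUI (p i) (fun x => has (p ^~ x) l) b; lia.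
Qed.

Section Seeds.
Variable pi : nat -> nat.

Fixpoint seeds_from (m n : nat) : seq (seq nat) :=
  if n is n'.+1 then [seq k :: s | k <- iota 1 (pi m), s <- seeds_from m.+1 n']
  else [:: [::]].

Definition seeds r := seeds_from 1 r.

Definition seed_of (s : seq nat) : nat -> nat := fun j => nth 0%N s j.-1.

Definition take_seed (sigma : nat -> nat) r : seq nat := [seq sigma j | j <- iota 1 r].

Definition depends_on r (F : (nat -> nat) -> bool) :=
  forall sigma sigma', (forall j, (0 < j <= r)%N -> sigma j = sigma' j) -> F sigma = F sigma'.

Lemma mem_seeds_from m n s : s \in seeds_from m n <->
  size s = n /\ (forall i, (i < n)%N -> (1 <= nth 0%N s i <= pi (m + i))%N).
Proof.
elim: n m s => [|n IH] m s /=.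
  by rewrite inE; split=> [/eqP ->|[/size0nil ->]].
split=> [/allpairsP[[k s'] [/= hk /IH[hs hs'] ->]]|].
  split=> [|[|i] hi /=]; first by rewrite /= hs.
    by move: hk; rewrite mem_iota addn0; lia.
  by rewrite addnS -addSn hs'.
case: s => [|k s] [//= [hs] hks].
apply/allpairsP; exists (k, s); split => //=.
  by have := hks 0%N isT; rewrite mem_iota addn0 /=; lia.
by apply/IH; split => // i hi; rewrite addSn -addnS; apply: (hks i.+1).
Qed.

Lemma mem_seeds r s : s \in seeds r <-> size s = r /\ legal_on pi (seed_of s) 1 r.+1.
Proof.
rewrite mem_seeds_from; split=> -[hs hv]; split => //.
  by move=> j hj; have := hv j.-1; rewrite add1n prednK; [apply; lia | lia].
by move=> i hi; have := hv i.+1; rewrite add1n; apply; lia.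
Qed.

Lemma uniq_seeds_from m n : uniq (seeds_from m n).
Proof.
elim: n m => [|n IH] m //=; apply: allpairs_uniq => //; first exact: iota_uniq.
by move=> [a b] [c e] _ _ [-> ->].
Qed.

Lemma size_seeds_from m n : size (seeds_from m n) = (\prod_(j <- iota m n) pi j)%N.
Proof.
elim: n m => [|n IH] m /=; first by rewrite big_nil.
by rewrite size_allpairs size_iota IH big_cons.
Qed.

Lemma seed_of_take sigma r j : (0 < j <= r)%N -> seed_of (take_seed sigma r) j = sigma j.
Proof.
by move=> hj; rewrite /seed_of /take_seed (nth_map 0%N) ?size_iota ?nth_iota; try lia;
  rewrite add1n prednK; lia.
Qed.

Lemma take_seed_of s : take_seed (seed_of s) (size s) = s.
Proof.
apply: (@eq_from_nth _ 0%N); rewrite size_map size_iota // => i hi.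
by rewrite (nth_map 0%N) ?size_iota // nth_iota.
Qed.

Lemma mem_take_seed sigma r : take_seed sigma r \in seeds r <-> legal_on pi sigma 1 r.+1.
Proof.
rewrite mem_seeds size_map size_iota; split=> [[_ hv] j hj|hv].
  by rewrite -(seed_of_take sigma hj); apply: hv.
by split=> // j hj; rewrite seed_of_take //; apply: hv.
Qed.

Lemma depends_on_take r F sigma : depends_on r F -> F sigma = F (seed_of (take_seed sigma r)).
Proof. by move=> hF; apply: hF => j hj; rewrite seed_of_take. Qed.

Definition seeds_step r s := take_seed (block_step pi 1 r (seed_of s)) r.

Lemma seeds_step_mem r s : s \in seeds r -> seeds_step r s \in seeds r.
Proof. by move=> /mem_seeds[_ hs]; apply/mem_take_seed; apply: scan_legal. Qed.

Lemma seeds_step_inj r : {in seeds r &, injective (seeds_step r)}.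
Proof.
move=> s s' /mem_seeds[hs legal_s] /mem_seeds[hs' legal_s'] e.
rewrite -(take_seed_of s) -(take_seed_of s') hs hs'; apply/eq_in_map => j.
rewrite mem_iota => hj; apply: (scan_inj_on legal_s legal_s') => // i hi.
have hir : (0 < i <= r)%N by lia.
by have := congr1 (seed_of^~ i) e; rewrite /seeds_step !seed_of_take.
Qed.

Lemma perm_seeds_step r : perm_eq [seq seeds_step r s | s <- seeds r] (seeds r).
Proof.
have uniq_step : uniq [seq seeds_step r s | s <- seeds r].
  by rewrite map_inj_in_uniq ?uniq_seeds_from //; apply: seeds_step_inj.
have step_sub : {subset [seq seeds_step r s | s <- seeds r] <= seeds r}.
  by move=> x /mapP[y hy ->]; apply: seeds_step_mem.
have [_ eq_mem] := uniq_min_size uniq_step step_sub ltac:(by rewrite size_map).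
exact: uniq_perm (uniq_seeds_from _ _) eq_mem.
Qed.

Lemma count_token_stationary (a : pred nat) r t : (0 < t)%N ->
  count (fun s => a (token pi (seed_of s) r t)) (seeds r) =
  count (fun s => a (token pi (seed_of s) r 1)) (seeds r).
Proof.
elim: t => [|[|t] IH] // _; rewrite -IH //.
rewrite -[RHS](permP (perm_seeds_step r)) count_map; apply: eq_in_count => s hs /=.
rewrite !token_block /= block_tokenS; congr a; apply: block_token_eq_on => j hj.
by rewrite seed_of_take //; lia.
Qed.

Lemma count_occurs_le r T :
  (count (fun s => has (fun t => Kis pi (seed_of s) t r) (iota 1 T)) (seeds r)
   <= T * count (fun s => Kis pi (seed_of s) 1 r) (seeds r))%N.
Proof.
apply: leq_trans (count_has_le _ _ _) _.
rewrite big_seq (eq_bigr (fun=> count (fun s => Kis pi (seed_of s) 1 r) (seeds r))).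
  by rewrite -big_seq big_const_seq count_predT size_iota iter_addn_0 mulnC.
move=> t; rewrite mem_iota => /andP[t_gt0 _].
exact: (count_token_stationary (fun k => (0 < r)%N && (k == r))).
Qed.

Lemma depends_on_take_seed r (p : pred (seq nat)) :
  depends_on r (fun sigma => p (take_seed sigma r)).
Proof.
by move=> sigma sigma' h; congr p; apply/eq_in_map => j; rewrite mem_iota => hj; apply: h; lia.
Qed.

Lemma Kis_depends t r : depends_on r (fun sigma => Kis pi sigma t r).
Proof. by move=> sigma sigma'; apply: Kis_eq_on. Qed.

Lemma occurs_depends T r :
  depends_on r (fun sigma => has (fun t => Kis pi sigma t r) (iota 1 T)).
Proof. by move=> sigma sigma' h; apply: eq_has => t; apply: Kis_eq_on. Qed.

End Seeds.

Local Open Scope classical_set_scope.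
Local Open Scope ring_scope.
Local Open Scope ereal_scope.

Lemma nneseries_measure_le d (T : measurableType d) (R : realType) (mu : measure T R)
    (F : nat -> set T) (E : set T) :
  (forall n, measurable (F n)) -> measurable E -> trivIset setT F ->
  (forall n, F n `<=` E) -> \sum_(n <oo) mu (F n) <= mu E.
Proof.
move=> mF mE tF FE; rewrite (cvg_lim _ (measure_sigma_additive mF tF)) //.
by apply: le_measure; rewrite ?inE //; [exact: bigcup_measurable | move=> w [n _ /FE]].
Qed.

Section SeedProbability.
Context (R : realType) (d : measure_display) (Omega : measurableType d)
  (P : probability Omega R) (pi : nat -> nat) (Sigma : nat -> Omega -> nat).
Hypothesis Sigma_measurable : forall r k : nat, measurable [set w | Sigma r w = k].
Hypothesis Sigma_uniform : forall r k : nat, (0 < r)%N -> (1 <= k <= pi r)%N ->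
  P [set w | Sigma r w = k] = ((pi r)%:R^-1)%:E.
Hypothesis Sigma_indep : forall (I : seq nat) (k : nat -> nat),
  uniq I -> all (fun r => (0 < r)%N) I ->
  P (\bigcap_(r in [set` I]) [set w | Sigma r w = k r])
  = \prod_(r <- I) P [set w | Sigma r w = k r].
Hypothesis pi_gt0 : forall r : nat, (0 < r)%N -> (0 < pi r)%N.

Definition seed (w : Omega) : nat -> nat := fun j => Sigma j w.

Definition occurs_by T r w := has (fun t => Kis pi (seed w) t r) (iota 1 T).

Definition seed_weight r : R := (\prod_(j <- iota 1 r) (pi j)%:R^-1)%R.

Lemma measurable_seed_event r F : depends_on r F -> measurable [set w | F (seed w)].
Proof.
elim: r F => [|r IH] F hF.
  have const w : F (seed w) = F (fun=> 0%N) by apply: hF => j; lia.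
  have -> : [set w | F (seed w)] = if F (fun=> 0%N) then setT else set0.
    by apply/seteqP; split=> w /=; rewrite const; case: ifP.
  by case: ifP.
have -> : [set w | F (seed w)] = \bigcup_k
    ([set w | Sigma r.+1 w = k] `&` [set w | F (set_clock (seed w) r.+1 k)]).
  apply/seteqP; split=> w /=.
    by exists (Sigma r.+1 w) => //; split; rewrite //= (hF _ (seed w)) // => j _;
      rewrite /set_clock; case: eqP => [->|].
  by move=> [k _ [/= <-]]; rewrite (hF _ (seed w)) // => j _;
    rewrite /set_clock; case: eqP => [->|].
apply: bigcup_measurable => k _; apply: measurableI => //.
apply: (IH (fun sigma => F (set_clock sigma r.+1 k))) => sigma sigma' h.
by apply: hF => j hj; rewrite /set_clock; case: eqP => // /eqP jr; apply: h; lia.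
Qed.

Lemma measurable_take_seed r (p : pred (seq nat)) :
  measurable [set w | p (take_seed (seed w) r)].
Proof. exact: measurable_seed_event (@depends_on_take_seed r p). Qed.

Lemma measurable_Kis t r : measurable [set w | Kis pi (seed w) t r].
Proof. exact: measurable_seed_event (@Kis_depends pi t r). Qed.

Lemma measurable_occurs T r : measurable [set w | occurs_by T r w].
Proof. exact: measurable_seed_event (@occurs_depends pi T r). Qed.

Lemma prob_take_seed r s : s \in seeds pi r ->
  P [set w | take_seed (seed w) r == s] = (seed_weight r)%:E.
Proof.
move=> /mem_seeds[hs hlegal].
have -> : [set w | take_seed (seed w) r == s] =
    \bigcap_(j in [set` iota 1 r]) [set w | Sigma j w = seed_of s j].
  apply/seteqP; split=> w /=.
    by move=> /eqP <- j; rewrite /= mem_iota => hj; rewrite seed_of_take //; lia.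
  by move=> h; rewrite -(take_seed_of s) hs; apply/eqP/eq_in_map => j /h.
rewrite Sigma_indep ?iota_uniq //; last by apply/allP => j; rewrite mem_iota; lia.
rewrite /seed_weight -prodEFin; apply: eq_big_seq => // j; rewrite mem_iota => hj.
by apply: Sigma_uniform; [lia | apply: hlegal; lia].
Qed.

Lemma prob_take_seed_in r l : uniq l -> {subset l <= seeds pi r} ->
  P [set w | take_seed (seed w) r \in l] = ((size l)%:R * seed_weight r)%:E.
Proof.
elim: l => [|s l IH] /=.
  move=> _ _; rewrite mul0r (_ : [set w | _] = set0) ?measure0 //.
  by apply/seteqP; split.
move=> /andP[sl ul] lsub.
have l_seeds : {subset l <= seeds pi r} by move=> x xl; apply: lsub; rewrite inE xl orbT.
have -> : [set w | take_seed (seed w) r \in s :: l] =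
    [set w | take_seed (seed w) r == s] `|` [set w | take_seed (seed w) r \in l].
  by apply/seteqP; split=> w /=; rewrite inE => /orP.
have -> : P ([set w | take_seed (seed w) r == s] `|` [set w | take_seed (seed w) r \in l])
    = P [set w | take_seed (seed w) r == s] + P [set w | take_seed (seed w) r \in l].
  apply: measureU; [exact: measurable_take_seed (pred1 s) | exact: measurable_take_seed |].
  by apply/seteqP; split=> w // [/eqP /= ->]; rewrite (negbTE sl).
rewrite prob_take_seed ?lsub ?mem_head // IH // -EFinD.
by rewrite mulrSr mulrDl mul1r addrC.
Qed.

Lemma prob_seed_legal r : P [set w | take_seed (seed w) r \in seeds pi r] = 1.
Proof.
rewrite prob_take_seed_in ?uniq_seeds_from // size_seeds_from natr_prod /seed_weight.
rewrite -big_split big_seq big1 // => j; rewrite mem_iota => hj /=.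
by rewrite mulfV // pnatr_eq0 -lt0n pi_gt0 //; lia.
Qed.

Lemma prob_depends r F : depends_on r F ->
  P [set w | F (seed w)] = ((count (F \o seed_of) (seeds pi r))%:R * seed_weight r)%:E.
Proof.
move=> hF; set L := [set w | take_seed (seed w) r \in seeds pi r].
have mL : measurable L by exact: measurable_take_seed.
have mF := measurable_seed_event hF.
have outside_null : P ([set w | F (seed w)] `\` L) = 0.
  have PLc : P (~` L) = 0 by rewrite probability_setC // prob_seed_legal subee.
  apply/eqP; rewrite eq_le measure_ge0 andbT -PLc.
  by apply: le_measure; rewrite ?inE; [exact: measurableD | exact: measurableC | move=> w []].
rewrite (measureDI P mF mL) -[RHS]add0e -size_filter; congr (_ + _); first exact: outside_null.
have -> : [set w | F (seed w)] `&` L =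
    [set w | take_seed (seed w) r \in [seq s <- seeds pi r | F (seed_of s)]].
  apply/seteqP; split=> w /=; rewrite mem_filter /= -(depends_on_take _ hF).
    by move=> [-> ->].
  by move=> /andP[].
apply: prob_take_seed_in; first by rewrite filter_uniq ?uniq_seeds_from.
by move=> s; rewrite mem_filter => /andP[].
Qed.

Lemma prob_occurs_le T r :
  P [set w | occurs_by T r w] <= T%:R%:E * P [set w | Kis pi (seed w) 1 r].
Proof.
rewrite (prob_depends (@occurs_depends pi T r)) (prob_depends (@Kis_depends pi 1 r)).
rewrite -EFinM lee_fin mulrA -natrM ler_wpM2r ?ler_nat ?count_occurs_le //.
by apply: prodr_ge0 => j _; rewrite invr_ge0.
Qed.

Lemma prob_occurs_wbar T r : (forall j, (0 < j)%N -> (1 < pi j)%N) ->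
  (0 < r)%N -> (wbar R pi r <= T%:R)%R -> P [set w | occurs_by T r w] = 1.
Proof.
move=> hpi r_gt0 hw; apply/eqP.
rewrite eq_le probability_le1 /=; last exact: measurable_occurs.
rewrite -(prob_seed_legal r); apply: le_measure; rewrite ?inE.
- exact: measurable_take_seed.
- exact: measurable_occurs.
move=> w /mem_take_seed hlegal; have [t ht htok] := token_hit_before_wbar hpi r_gt0 hlegal hw.
by apply/hasP; exists t; [rewrite mem_iota; lia | rewrite /Kis r_gt0 htok eqxx].
Qed.

Lemma integral_counting_occurs T :
  \int[P]_w counting [set r | exists t, (1 <= t <= T)%N /\ Kis pi (seed w) t r]
  = \sum_(r <oo) P [set w | occurs_by T r w].
Proof.
transitivity (\int[P]_w \sum_(r <oo) (\1_[set w | occurs_by T r w] w)%:E).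
  apply: eq_integral => w _; rewrite counting_dirac; apply: eq_eseriesr => r _.
  rewrite diracE indicE; congr ((nat_of_bool _)%:R%:E).
  apply/idP/idP => /set_mem h; apply/mem_set.
    by case: h => t [ht hK]; apply/hasP; exists t; rewrite ?mem_iota //; lia.
  by case/hasP: h => t; rewrite mem_iota => ht hK; exists t; split => //; lia.
rewrite integral_nneseries //; last first.
  by move=> r; apply/measurable_EFinP/measurable_indic/measurable_occurs.
apply: eq_eseriesr => r _; rewrite integral_indic //; last exact: measurable_occurs.
by rewrite setIT.
Qed.

Lemma counting_wbar_le_integral T : (forall j, (0 < j)%N -> (1 < pi j)%N) ->
  counting [set r | (0 < r)%N /\ (wbar R pi r <= T%:R)%R]
  <= \int[P]_w counting [set r | exists t, (1 <= t <= T)%N /\ Kis pi (seed w) t r].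
Proof.
move=> hpi; rewrite integral_counting_occurs counting_dirac.
apply: lee_nneseries => [r _ _|r _]; first exact: measure_ge0.
rewrite diracE; case: (boolP (r \in _)) => [/set_mem[r_gt0 hw]|_]; last exact: measure_ge0.
by rewrite prob_occurs_wbar.
Qed.

Lemma integral_le_counting_miss T (B : set nat) :
  \int[P]_w counting [set r | exists t, (1 <= t <= T)%N /\ Kis pi (seed w) t r]
  <= counting B + T%:R%:E * P [set w | ~ (exists r, B r /\ Kis pi (seed w) 1 r)].
Proof.
pose D r := if `[< B r >] then set0 else [set w | Kis pi (seed w) 1 r].
have mD r : measurable (D r) by rewrite /D; case: ifP => // _; apply: measurable_Kis.
have occurs_le r : P [set w | occurs_by T r w] <= \d_r B + T%:R%:E * P (D r).
  rewrite diracE /D; have [hB|hB] := pselect (B r).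
    rewrite mem_set ?asboolT //= measure0 mule0 adde0.
    exact/probability_le1/measurable_occurs.
  by rewrite memNset ?asboolF //= add0e; apply: prob_occurs_le.
rewrite integral_counting_occurs.
apply: le_trans (lee_nneseries (fun r _ _ => measure_ge0 _ _) (fun r _ => occurs_le r)) _.
rewrite nneseriesD; last 2 first.
- by move=> r _ _; exact: measure_ge0.
- by move=> r _ _; apply: mule_ge0; [rewrite lee_fin | exact: measure_ge0].
rewrite -counting_dirac nneseriesZl; last by move=> r _; exact: measure_ge0.
apply: leeD2l; apply: lee_wpmul2l; first by rewrite lee_fin.
apply: nneseries_measure_le => //.
- rewrite (_ : [set w | _] = ~` \bigcup_(r in B) [set w | Kis pi (seed w) 1 r]).
    by apply/measurableC/bigcup_measurable => r _; apply: measurable_Kis.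
  by apply/seteqP; split=> w /= h; [move=> [r]|move=> [r []]]; move=> *; apply: h; exists r.
- move=> i j _ _ [w []]; rewrite /D; case: ifP => // _; case: ifP => // _.
  exact: Kis_unique.
move=> r w; rewrite /D; case: ifP => // /asboolPn hB hK [r' [hB' hK']].
by apply: hB; rewrite (Kis_unique hK hK').
Qed.

End SeedProbability.

Unset Implicit Arguments.

Theorem theorem6 (R : realType) (d : measure_display) (Omega : measurableType d)
  (P : probability Omega R) (pi : nat -> nat) (Sigma : nat -> Omega -> nat)
  (T : nat)
  (hpi : forall r : nat, (0 < r)%N -> (2 <= pi r)%N)
  (hmeas : forall r k : nat, measurable [set w | Sigma r w = k])
  (hunif : forall r k : nat, (0 < r)%N -> (1 <= k <= pi r)%N ->
     P [set w | Sigma r w = k] = ((pi r)%:R^-1)%:E)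
  (hindep : forall (I : seq nat) (k : nat -> nat), uniq I -> all (fun r => (0 < r)%N) I ->
     P (\bigcap_(r in [set` I]) [set w | Sigma r w = k r])
     = \prod_(r <- I) P [set w | Sigma r w = k r])
  (hT : (0 < T)%N) :
  let K := fun (w : Omega) (t r : nat) => Kis pi (fun j => Sigma j w) t r in
  let N := fun w : Omega => [set r : nat | exists t : nat, (1 <= t <= T)%N /\ K w t r] in
  let A := [set r : nat | (0 < r)%N /\ (wbar R pi r <= T%:R)%R] in
  let B := [set r : nat | (0 < r)%N /\ (T%:R^-1)%:E <= P [set w | K w 1%N r]] in
  counting A <= \int[P]_w counting (N w)
  /\ \int[P]_w counting (N w)
     <= counting B + (T%:R)%:E * P [set w | ~ (exists r, B r /\ K w 1%N r)].
Proof.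
move=> K N A B.
have pi_gt0 r : (0 < r)%N -> (0 < pi r)%N by move/hpi/ltnW.
split.
- exact: counting_wbar_le_integral hmeas hunif hindep pi_gt0 T hpi.
- exact: integral_le_counting_miss hmeas hunif hindep pi_gt0 T B.
Qed.
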